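(* Let $\kappa$ be an uncountable cardinal, let $X$ be a set of cardinality at least $\kappa$, let $\Gamma$ be the group of all permutations of $X$ acting by application, and let $I_\kappa$ be the ideal of subsets of $X$ of cardinality less than $\kappa$. Then $\Gamma\curvearrowright X, I_\kappa$ is a simple dynamical ideal.
   Context: For a group $\Gamma$ acting on $X$ and $a\subseteq X$, $\mathrm{pstab}(a)=\{\gamma\in\Gamma:\gamma\cdot x=x\ \forall x\in a\}$. A dynamical ideal $\Gamma\curvearrowright X, I$ (a $\Gamma$-invariant ideal containing all singletons) is simple if for all $a\subseteq b$ in $I$, the only normal subgroup of $\mathrm{pstab}(a)$ containing $\mathrm{pstab}(b)$ is $\mathrm{pstab}(a)$ itself. *)

From HB Require Import structures.
From mathcomp Require Import all_boot all_order all_algebra.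
From mathcomp Require Import all_classical.
Set Implicit Arguments. Unset Strict Implicit. Unset Printing Implicit Defensive.
Local Open Scope classical_set_scope.
Local Open Scope card_scope.

Definition card_lt (T U : Type) (A : set T) (B : set U) : Prop :=
  (A #<= B) /\ ~ (B #<= A).

Definition Sym (X : Type) : set (X -> X) := [set f | bijective f].
Arguments Sym X : clear implicits.

Definition perm_subgroup (X : Type) (G : set (X -> X)) : Prop :=
  [/\ G `<=` Sym X, G id,
      (forall f g, G f -> G g -> G (f \o g)) &
      (forall f h, G f -> cancel f h -> cancel h f -> G h)].

Definition normal_subgroup (X : Type) (N G : set (X -> X)) : Prop :=
  [/\ N `<=` G, perm_subgroup N &
      (forall g h n, G g -> cancel g h -> cancel h g -> N n ->
         N (g \o n \o h))].

Definition pstab (X : Type) (Gamma : set (X -> X)) (a : set X) : set (X -> X) :=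
  [set g | Gamma g /\ forall x, a x -> g x = x].

Definition is_ideal (X : Type) (I : set (set X)) : Prop :=
  [/\ I set0, ~ I setT,
      (forall a b, I b -> a `<=` b -> I a) &
      (forall a b, I a -> I b -> I (a `|` b))].

Definition dynamical_ideal (X : Type) (Gamma : set (X -> X)) (I : set (set X))
  : Prop :=
  [/\ is_ideal I,
      (forall g a, Gamma g -> I a -> I (g @` a)) &
      (forall x, I [set x])].

Definition simple_dynamical_ideal (X : Type) (Gamma : set (X -> X))
  (I : set (set X)) : Prop :=
  dynamical_ideal Gamma I /\
  forall a b, I a -> I b -> a `<=` b ->
    forall N, normal_subgroup N (pstab Gamma a) ->
      pstab Gamma b `<=` N -> N = pstab Gamma a.

(** I_kappa : subsets of X of cardinality < |K| (kappa = |K|). *)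
Definition I_card (X K : Type) : set (set X) :=
  [set a | card_lt a [set: K]].
Arguments I_card X K : clear implicits.

From HB Require Import structures.
From mathcomp Require Import all_boot all_order all_algebra.
From mathcomp Require Import all_classical.
From mathcomp Require Import zify.
From Stdlib Require Import ClassicalEpsilon.
Local Open Scope classical_set_scope.
Local Open Scope card_scope.
Set Implicit Arguments. Unset Strict Implicit.

(* A small set c (|c| < kappa) can always be moved injectively off any other
   small set t: otherwise the complement of t would be small, and X, the union
   of two small sets, would be small too.  Closure of small sets under unions
   needs comparability of cardinals and |A x 2| <= |A| for infinite A, both
   obtained from Zorn's lemma.
   For a <= b small, N normal in pstab a and containing pstab b, and
   g in pstab a, let c = b \ a and let e(c), e'(c) be copies of c disjoint from
   each other and from b and g(b).  With s1 exchanging c and e(c) and s2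
   exchanging g(c) and e(c), the permutation s1 s2 g fixes b, so
   g = s2 s1 (s1 s2 g) lies in N as soon as s1, s2 do.  Each s_i fixes a and
   e'(c), and conjugating it by the exchange of c and e'(c) lands in pstab b. *)

Lemma card_le_injP {T U} {A : set T} {B : set U} (u0 : U) :
  A #<= B <-> exists2 f : T -> U, set_fun A B f & set_inj A f.
Proof.
split=> [/card_leP [h]|]; last by case/injfunPex => f; exact: inj_card_le.
pose f x := if pselect (A x) is left Ax then val (h (exist _ x (mem_set Ax))) else u0.
exists f => [x Ax|x y /set_mem Ax /set_mem Ay]; rewrite /f.
  by case: pselect => // Ax'; exact: set_mem (valP (h (exist _ x (mem_set Ax')))).
case: pselect => // Ax'; case: pselect => // Ay'.
by move=> /val_inj /(@inj _ _ _ h _ _ (in_setT _) (in_setT _)) [].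
Qed.

Definition partial_injection T U (G : set (T * U)) :=
  forall p q, G p -> G q -> (p.1 = q.1 <-> p.2 = q.2).

Lemma partial_injection_bigcup T U (F : set (set (T * U))) :
  total_on F subset -> (forall G, F G -> partial_injection G) ->
  partial_injection (\bigcup_(G in F) G).
Proof.
move=> Ftot Finj p q [G FG Gp] [H FH Hq].
have [GH|HG] := Ftot G H FG FH; first exact: Finj H FH _ _ (GH p Gp) Hq.
exact: Finj G FG _ _ Gp (HG q Hq).
Qed.

Lemma partial_injectionU T U (G H : set (T * U)) :
  partial_injection G -> partial_injection H ->
  (forall p q, G p -> H q -> p.1 <> q.1 /\ p.2 <> q.2) ->
  partial_injection (G `|` H).
Proof.
move=> Ginj Hinj GH p q [Gp|Hp] [Gq|Hq]; [exact: Ginj|idtac|idtac|exact: Hinj].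
- by have [n1 n2] := GH p q Gp Hq.
- by have [n1 n2] := GH q p Gq Hp; split=> /esym.
Qed.

Lemma partial_injection_card_le T U (G : set (T * U)) (A : set T) (B : set U) :
  partial_injection G -> (forall x, A x -> exists2 y, B y & G (x, y)) -> A #<= B.
Proof.
move=> Ginj AG; have [->|/set0P[x0 /AG[y0 _ _]]] := eqVneq A set0.
  exact: card_ge0.
pose P x y := B y /\ G (x, y); pose f x := epsilon (inhabits y0) (P x).
have fP x : A x -> P x (f x).
  by move=> /AG[y By Gxy]; apply: epsilon_spec; exists y.
apply/(card_le_injP y0); exists f => [x /fP[]//|x y /set_mem/fP[_ Gx] /set_mem/fP[_ Gy] fxy].
exact/(Ginj _ _ Gx Gy).
Qed.

Lemma card_le_total T U (A : set T) (B : set U) : A #<= B \/ B #<= A.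
Proof.
pose P G := partial_injection G /\ G `<=` A `*` B.
have [M [[Minj MAB] Mmax]] : exists M, P M /\ forall M', M `<` M' -> ~ P M'.
  apply: Zorn_bigcup => F FP Ftot; split.
    by apply: partial_injection_bigcup => // G /FP[].
  by apply: bigcup_sub => G /FP[].
have [domA|/existsNP[x /not_implyP[Ax xM]]] :=
    pselect (forall x, A x -> exists2 y, B y & M (x, y)).
  by left; apply: partial_injection_card_le Minj domA.
have [codB|/existsNP[y /not_implyP[By yM]]] :=
    pselect (forall y, B y -> exists2 x, A x & M (x, y)).
  right; apply: (@partial_injection_card_le _ _ [set q | M (q.2, q.1)]) codB.
  by move=> p q Mp Mq; exact: iff_sym (Minj _ _ Mp Mq).
have Mxy : forall p, M p -> p.1 <> x /\ p.2 <> y.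
  move=> [u v] Muv; have [/= Au Bv] := MAB _ Muv.
  by split=> /= E; subst; [apply: xM; exists v|apply: yM; exists u].
have /Mmax[] : M `<` M `|` [set (x, y)].
  split; first exact: subsetUl.
  by move=> /(_ (x, y) (or_intror erefl)) /Mxy[].
split; last by move=> p [/MAB//|->].
apply: partial_injectionU => // [p q -> ->//|p q /Mxy[? ?] ->]; split; done.
Qed.

Lemma countableU T (A B : set T) : countable A -> countable B -> countable (A `|` B).
Proof.
move=> cA cB; rewrite -bigcup2E; apply: bigcup_countable; first exact: countableP.
by move=> [|[|n]] _ //=; exact: countable0.
Qed.

Lemma card_setU_countable_le T (S C : set T) :
  [set: nat] #<= S -> countable C -> S `|` C #<= S.
Proof.
(* S \ R is mapped identically and R `|` C injectively into R = i(nat). *)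
move=> natS cC; have [s0 _] := infinite_setN0 (proj2 (infiniteP S) natS).
have [i iS iinj] := (card_le_injP s0).1 natS.
pose R := i @` [set: nat].
have RS : R `<=` S by move=> _ [n _ <-]; exact: iS.
have [g gR ginj] : exists2 g, set_fun (R `|` C) R g & set_inj (R `|` C) g.
  apply/(card_le_injP (i 0)); apply: (@card_le_trans _ _ _ [set: nat]).
    exact/countableU/cC/card_image_le.
  by have /card_eqPle[] := inj_card_eq iinj.
apply/(card_le_injP s0).
exists (fun x => if pselect ((S `\` R) x) then x else g x).
  move=> x SCx; case: pselect => [[]//|SRx]; apply/RS/gR.
  by case: SCx => [Sx|]; [left; apply: contra_notP SRx|right].
move=> x y /set_mem SCx /set_mem SCy.
have RC z : (S `|` C) z -> ~ (S `\` R) z -> (R `|` C) z.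
  by move=> [Sz|Cz] SRz; [left; apply: contra_notP SRz|right].
case: pselect => [[Sx Rx]|nx] /=; case: pselect => [[Sy Ry]|ny] /=.
- by [].
- by move=> xgy; have := gR _ (RC _ SCy ny); rewrite -xgy.
- by move=> gxy; have := gR _ (RC _ SCx nx); rewrite gxy.
- by apply: ginj; apply: mem_set; exact: RC.
Qed.

Lemma card_le_setX T U V (A : set T) (B : set U) (C : set V) :
  A #<= B -> A `*` C #<= B `*` C.
Proof.
have [->|/set0P[u0 _] AB] := eqVneq B set0.
  by move=> /card_le0P->; rewrite set0X; exact: card_ge0.
have [h hB hinj] := (card_le_injP u0).1 AB.
apply: (@partial_injection_card_le _ _ [set q | A q.1.1 /\ q.2 = (h q.1.1, q.1.2)]).
  move=> [[x c] _] [[x' c'] _] /= [Ax ->] [Ax' ->]; split=> [[-> ->]//|[hx ->]].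
  by rewrite (hinj x x') ?inE.
by move=> [x c] [/= Ax Cc]; exists (h x, c) => //; split=> //; exact: hB.
Qed.

Section Doubling.
Variables (T : Type) (A : set T).

(* [doubling_graph M]: M is the graph of an injection S x bool -> S, where
   S = doubled_domain M is a subset of A. *)

Definition doubled_domain (M : set (T * bool * T)) : set T :=
  [set x | forall b, exists y, M ((x, b), y)].

Definition doubling_graph (M : set (T * bool * T)) :=
  [/\ partial_injection M, doubled_domain M `<=` A &
      forall p y, M (p, y) -> doubled_domain M p.1 /\ doubled_domain M y].

Lemma doubled_domain_sub (M M' : set (T * bool * T)) :
  M `<=` M' -> doubled_domain M `<=` doubled_domain M'.
Proof. by move=> MM' x xM b; have [y /MM' ?] := xM b; exists y. Qed.

Lemma doubling_graph_bigcup (F : set (set (T * bool * T))) :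
  F `<=` doubling_graph -> total_on F subset ->
  doubling_graph (\bigcup_(G in F) G).
Proof.
move=> FP Ftot; have GU G : F G -> G `<=` \bigcup_(G in F) G by move=> FG q Gq; exists G.
split.
- by apply: partial_injection_bigcup => // G /FP[].
- move=> x /(_ false)[y [G FG Gxy]]; have [_ GA Gdom] := FP G FG.
  exact/GA/(Gdom _ _ Gxy).1.
- move=> p y [G FG Gpy]; have [_ _ /(_ p y Gpy)[Gp Gy]] := FP G FG.
  by split; apply: doubled_domain_sub (GU G FG) _ _.
Qed.

Lemma doubling_graph_extend (M : set (T * bool * T)) (i : nat -> T) :
  doubling_graph M -> set_fun [set: nat] (A `\` doubled_domain M) i -> injective i ->
  doubling_graph (M `|` [set q | exists n (b : bool), q = ((i n, b), i (2 * n + b)%N)]).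
Proof.
move=> [Minj MA Mdom] iA iinj.
have addbK n m (b b' : bool) : (2 * n + b = 2 * m + b')%N -> n = m /\ b = b'.
  by case: b; case: b' => /=; lia.
set N := [set q | _].
have NM : N `<=` M `|` N by move=> q; right.
have iN n : doubled_domain N (i n).
  by move=> b; exists (i (2 * n + b)%N), n, b.
split.
- apply: partial_injectionU => //.
  + move=> _ _ [n [b ->]] [m [b' ->]] /=; split.
      by case=> /iinj -> ->.
    by move=> /iinj/addbK[-> ->].
  + move=> [[x b0] y] _ /Mdom[/= xdom ydom] [n [b ->]] /=.
    by split=> [[E _]|E]; [have [_] := iA n I|have [_] := iA (2 * n + b)%N I];
      rewrite -E.
- move=> x xdom; have [y [Mxy|[n [b [-> _]]]]] := xdom false.
    exact/MA/(Mdom _ _ Mxy).1.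
  by have [] := iA n I.
- move=> p y [/Mdom[pdom ydom]|[n [b [-> ->]]]].
    by split; apply: doubled_domain_sub (@subsetUl _ M N) _ _.
  by split; apply: doubled_domain_sub NM _ (iN _).
Qed.

End Doubling.

Lemma card_setX_bool_le T (A : set T) : infinite_set A -> A `*` [set: bool] #<= A.
Proof.
move=> Ainf; have [t0 _] := infinite_setN0 Ainf.
have [M [MA Mmax]] : exists M, doubling_graph A M /\
    forall M', M `<` M' -> ~ doubling_graph A M'.
  exact/Zorn_bigcup/doubling_graph_bigcup.
have [Minj SA Mdom] := MA; set S := doubled_domain M in SA Mdom.
have ASfin : finite_set (A `\` S).
  apply/finite_setPn => /(card_le_injP t0)[i iA /in2TT iinj].
  have /Mmax[] := doubling_graph_extend MA iA iinj.
  split; first exact: subsetUl.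
  move=> /(_ ((i 0, false), i 0)%N) MN.
  have /Mdom[/= i0S _] : M ((i 0, false), i 0)%N by apply: MN; right; exists 0%N, false.
  by have [_] := iA 0%N I.
have AS : A #<= S.
  rewrite -{1}(setDUK SA); apply: card_setU_countable_le.
    apply/infiniteP => Sfin; apply: Ainf; rewrite -(setDUK SA).
    by rewrite finite_setU.
  exact: finite_set_countable.
apply: card_le_trans (card_le_setX _ AS) _.
apply: (partial_injection_card_le Minj) => -[x b] [/= Sx _].
by have [y Mxy] := Sx b; exists y => //; exact/SA/(Mdom _ _ Mxy).2.
Qed.

Lemma card_le_lt_trans T U V (A : set T) (A' : set U) (B : set V) :
  A #<= A' -> card_lt A' B -> card_lt A B.
Proof.
move=> AA' [A'B nBA']; split; first exact: card_le_trans AA' A'B.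
by move=> BA; apply: nBA'; exact: card_le_trans BA AA'.
Qed.

Lemma card_lt_finite T U (A : set T) (B : set U) :
  finite_set A -> infinite_set B -> card_lt A B.
Proof.
move=> Afin Binf; split; last by move=> /card_le_finite/(_ Afin).
exact: card_le_trans (finite_set_countable Afin) (proj1 (infiniteP B) Binf).
Qed.

Lemma card_lt_setU T U (A1 A2 : set T) (B : set U) : infinite_set B ->
  card_lt A1 B -> card_lt A2 B -> card_lt (A1 `|` A2) B.
Proof.
move=> Binf; wlog A21 : A1 A2 / A2 #<= A1 => [wlogA|lt1 _].
  by have [/wlogA + lt1 lt2|/wlogA + lt1 lt2] := card_le_total A1 A2;
    [rewrite setUC; apply|apply].
have [A1fin|A1inf] := pselect (finite_set A1).
  apply: card_lt_finite => //; rewrite finite_setU; split=> //.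
  exact: card_le_finite A21 A1fin.
apply: card_le_lt_trans lt1; apply: card_le_trans (card_setX_bool_le A1inf).
have [a1 _] := infinite_setN0 A1inf; have [h hA1 hinj] := (card_le_injP a1).1 A21.
apply/(card_le_injP (a1, true)).
exists (fun x => if pselect (A1 x) then (x, true) else (h x, false)).
  by move=> x A12x; case: pselect => [//|nA1x]; split=> //; apply: hA1; case: A12x.
move=> x y /set_mem A12x /set_mem A12y.
case: pselect => A1x; case: pselect => A1y //= -[] // /hinj; apply; apply: mem_set.
  by case: A12x.
by case: A12y.
Qed.

Lemma card_lt_setC_le T U (C D : set T) (B : set U) :
  infinite_set B -> B #<= [set: T] -> card_lt C B -> card_lt D B -> C #<= ~` D.
Proof.
move=> Binf BT ltC ltD; have [//|DC] := card_le_total C (~` D).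
have [_ /(_ BT)[]] : card_lt [set: T] B.
by rewrite -(setUv D); apply: card_lt_setU => //; exact: card_le_lt_trans ltC.
Qed.

Section Exchange.
Variables (X : Type) (D : set X) (f : X -> X).

Definition exchange (x : X) : X :=
  if pselect (D x) then f x
  else if pselect ((f @` D) x) then epsilon (inhabits x) (fun y => D y /\ f y = x)
  else x.

Hypotheses (fD : set_fun D (~` D) f) (finj : set_inj D f).

Lemma exchange_in x : D x -> exchange x = f x.
Proof. by rewrite /exchange; case: pselect. Qed.

Lemma exchange_image x : D x -> exchange (f x) = x.
Proof.
move=> Dx; rewrite /exchange; case: pselect => [/(fD Dx)//|_] /=.
case: pselect => [fDx|nfDx] /=; last by case: nfDx; exists x.
set P := fun y => D y /\ f y = f x.
have [Dy fy] : P (epsilon (inhabits (f x)) P) by apply: epsilon_spec; exists x.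
by apply: finj fy; exact: mem_set.
Qed.

Lemma exchange_out x : ~ D x -> ~ (f @` D) x -> exchange x = x.
Proof. by rewrite /exchange => nDx nfDx; do 2 case: pselect => //=. Qed.

Lemma exchangeK : involutive exchange.
Proof.
move=> x; have [Dx|nDx] := pselect (D x); first by rewrite (exchange_in Dx) exchange_image.
have [[y Dy <-]|nfDx] := pselect ((f @` D) x); first by rewrite (exchange_image Dy) (exchange_in Dy).
by rewrite !exchange_out.
Qed.

End Exchange.

Section NormalSubgroupPstab.
Variables (X : Type) (a b : set X) (N : set (X -> X)).
Hypotheses (ab : a `<=` b) (Nnormal : normal_subgroup N (pstab (Sym X) a))
  (pstabN : pstab (Sym X) b `<=` N).
Let c := b `\` a.

Lemma exchange_pstab (D : set X) (f : X -> X) :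
  set_fun D (~` D) f -> set_inj D f ->
  (forall x, a x -> ~ D x /\ ~ (f @` D) x) -> pstab (Sym X) a (exchange D f).
Proof.
move=> fD finj aD; split; first exact/inv_bij/exchangeK.
by move=> x /aD[nDx nfDx]; exact: exchange_out.
Qed.

Lemma mem_normal_of_fix_image (e k : X -> X) :
  set_fun c (~` b) e -> set_inj c e ->
  pstab (Sym X) a k -> (forall x, c x -> k (e x) = e x) -> N k.
Proof.
move=> eb einj [kbij ka] ke; have [_ _ Nconj] := Nnormal.
have ec : set_fun c (~` c) e by move=> x cx [/(eb _ cx)].
set s := exchange c e.
have sS : pstab (Sym X) a s.
  apply: exchange_pstab => // x ax; split=> [[_ /(_ ax)]//|[y cy exy]].
  by apply: (eb _ cy); rewrite exy; exact: ab.
have sK : involutive s := exchangeK ec einj.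
suff /(Nconj _ _ _ sS sK sK) : N (s \o k \o s).
  by congr N; apply/funext => x /=; rewrite !sK.
apply: pstabN; split; first by apply: bij_comp; [apply: bij_comp|]; case: sS.
move=> x bx /=; have [ax|nax] := pselect (a x).
  by have [_ sa] := sS; rewrite (sa x ax) (ka x ax) (sa x ax).
have cx : c x by split.
by rewrite /s (exchange_in e cx) ke // (exchange_image ec einj cx).
Qed.

Lemma mem_normal_pstab (g e e' : X -> X) :
  pstab (Sym X) a g ->
  set_fun c (~` (b `|` g @` b)) e -> set_inj c e ->
  set_fun c (~` (b `|` g @` b `|` e @` c)) e' -> set_inj c e' ->
  N g.
Proof.
move=> [[ginv gK Kg] ga] ebg einj e'bge e'inj.
have [_ [_ _ Ncomp _] _] := Nnormal; have ginj : injective g := can_inj gK.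
have e'b : set_fun c (~` b) e' by move=> x cx bx; apply: (e'bge _ cx); left; left.
have ec : set_fun c (~` c) e by move=> x cx [bex _]; apply: (ebg _ cx); left.
have eb : set_fun c (~` b) e by move=> x cx bex; apply: (ebg _ cx); left.
have egc : (e \o ginv) @` (g @` c) = e @` c.
  by rewrite image_comp; congr image; apply/funext => x /=; rewrite gK.
have egi_inj : set_inj (g @` c) (e \o ginv).
  move=> _ _ /set_mem[x cx <-] /set_mem[y cy <-] /=; rewrite !gK => exy.
  by rewrite (einj x y) ?inE.
have gce : set_fun (g @` c) (~` (g @` c)) (e \o ginv).
  move=> _ [y cy <-] [z cz] /=; rewrite gK => gze.
  by apply: (ebg _ cy); right; exists z => //; case: cz.
set s1 := exchange c e; set s2 := exchange (g @` c) (e \o ginv).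
have s1a : pstab (Sym X) a s1.
  apply: exchange_pstab => // x ax; split=> [[_ /(_ ax)]//|[y cy eyx]].
  by apply: (eb _ cy); rewrite eyx; exact: ab.
have s2a : pstab (Sym X) a s2.
  apply: exchange_pstab => // x ax; rewrite egc; split.
    by move=> [y [_ nay] gyx]; apply: nay; rewrite (ginj y x) // gyx ga.
  by move=> [y cy eyx]; apply: (eb _ cy); rewrite eyx; exact: ab.
have Ns1 : N s1.
  apply: (mem_normal_of_fix_image e'b e'inj s1a) => x cx.
  apply: exchange_out => [[/(e'b _ cx)]//|[y cy eyx]].
  by apply: (e'bge _ cx); right; exists y.
have Ns2 : N s2.
  apply: (mem_normal_of_fix_image e'b e'inj s2a) => x cx.
  apply: exchange_out; rewrite ?egc => -[y cy yx]; apply: (e'bge _ cx).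
    by left; right; exists y => //; case: cy.
  by right; exists y.
have s1K : involutive s1 := exchangeK ec einj.
have s2K : involutive s2 := exchangeK gce egi_inj.
have Nh : N (s1 \o s2 \o g).
  apply: pstabN; split.
    by apply: bij_comp; [apply: bij_comp; [case: s1a|case: s2a]|exists ginv].
  move=> x bx /=; have [ax|nax] := pselect (a x).
    by have [_ s1f] := s1a; have [_ s2f] := s2a; rewrite ga // s2f // s1f.
  have cx : c x by split.
  rewrite /s2 (exchange_in (e \o ginv) (_ : (g @` c) (g x))); last by exists x.
  by rewrite /= gK /s1 (exchange_image ec einj cx).
have -> : g = s2 \o s1 \o (s1 \o s2 \o g) by apply/funext => x /=; rewrite s1K s2K.
exact/Ncomp/Nh/Ncomp.
Qed.

End NormalSubgroupPstab.

Lemma simple_Sym_ideal (X : Type) (I : set (set X)) :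
  is_ideal I -> (forall x, I [set x]) -> (forall f C, I C -> I (f @` C)) ->
  (forall C D, I C -> I D -> C #<= ~` D) -> simple_dynamical_ideal (Sym X) I.
Proof.
move=> Iideal I1 Iimg Isep; split; first by split=> // g a _; exact: Iimg.
move=> a b Ia Ib ab N Nnormal pstabN; have [I0 nIT Isub IU] := Iideal.
have [x0 _] : [set: X] !=set0 by apply/set0P/eqP => T0; apply: nIT; rewrite T0.
apply/seteqP; split=> [|g ga]; first by case: Nnormal.
have Ic : I (b `\` a) by apply: Isub Ib _ => x [].
have Ibg := IU _ _ Ib (Iimg g _ Ib).
have [e ebg einj] := (card_le_injP x0).1 (Isep _ _ Ic Ibg).
have [e' e'bge e'inj] := (card_le_injP x0).1 (Isep _ _ Ic (IU _ _ Ibg (Iimg e _ Ic))).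
exact: (mem_normal_pstab ab Nnormal pstabN ga ebg einj e'bge e'inj).
Qed.

Theorem mainTheorem16 (K X : Type)
  (K_uncountable : ~ countable [set: K])
  (X_large : [set: K] #<= [set: X]) :
  simple_dynamical_ideal (Sym X) (I_card X K).
Proof.
have Kinf : infinite_set [set: K] by move=> /finite_set_countable.
apply: simple_Sym_ideal.
- split; first exact: card_lt_finite.
  + by case.
  + by move=> a b ltb ab; apply: card_le_lt_trans ltb; exact: subset_card_le.
  + by move=> a b; exact: card_lt_setU.
- by move=> x; apply: card_lt_finite => //; exact: finite_set1.
- by move=> f C; apply: card_le_lt_trans; exact: card_image_le.
- by move=> C D; exact: card_lt_setC_le.
Qed.
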